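(* Let $\mathfrak{h}$ be a finite-dimensional Hilbert space and let $\mathcal{L}_t=\sum_{m\in\mathbb{Z}}\mathcal{L}_m e^{-\mathrm{i}m\omega t}$ be a $T$-periodic Lindbladian ($\omega=2\pi/T$) on operators on $\mathfrak{h}$, as described in the context. For every integer $N\ge0$, the truncated van Vleck effective Liouvillian $\mathcal{L}_\mathrm{eff}=\sum_{k=0}^{N}\mathcal{L}_\mathrm{eff}^{(k)}$ has at least one eigenvalue equal to zero.
   Context: The Lindbladian is $\mathcal{L}_t(\rho)=-\mathrm{i}[H(t),\rho]+\sum_\alpha\big[L_\alpha(t)\rho L_\alpha^\dagger(t)-\tfrac12\{L_\alpha^\dagger(t)L_\alpha(t),\rho\}\big]$, where $H(t)=H(t+T)$ is Hermitian and the (finitely many) jump operators satisfy $L_\alpha(t+T)=L_\alpha(t)$. Writing $H(t)=\sum_m H_m e^{-\mathrm{i}m\omega t}$ and $L_\alpha(t)=\sum_m L_{\alpha,m}e^{-\mathrm{i}m\omega t}$, the Fourier components are $\mathcal{L}_m=\mathcal{H}_m+\mathcal{D}_m$ with $\mathcal{H}_m(\rho)=-\mathrm{i}[H_m,\rho]$ and $\mathcal{D}_m(\rho)=\sum_{\alpha,n}\big[L_{\alpha,m-n}\rho L_{\alpha,n}^\dagger-\tfrac12\{L_{\alpha,n}^\dagger L_{\alpha,m-n},\rho\}\big]$ (all Fourier sums assumed convergent). The van Vleck high-frequency expansion is defined via the ansatz $\mathcal{V}(t,t')=e^{\mathcal{G}_t}e^{\mathcal{L}_\mathrm{eff}(t-t')}e^{-\mathcal{G}_{t'}}$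 for the propagator, with $\mathcal{G}_t$ periodic, $\mathcal{L}_\mathrm{eff}=\sum_{k\ge0}\mathcal{L}_\mathrm{eff}^{(k)}$, $\mathcal{L}_\mathrm{eff}^{(k)}=O(\omega^{-k})$; it is obtained from the isolated-system van Vleck expansion by the substitution $H_m\to\mathrm{i}\mathcal{L}_m$, $H_\mathrm{eff}\to\mathrm{i}\mathcal{L}_\mathrm{eff}$. Explicitly $\mathcal{L}_\mathrm{eff}^{(0)}=\mathcal{L}_0$, $\mathrm{i}\mathcal{L}_\mathrm{eff}^{(1)}=\sum_{m\ne0}\frac{[\mathrm{i}\mathcal{L}_{-m},\mathrm{i}\mathcal{L}_m]}{2m\omega}$, $\mathrm{i}\mathcal{L}_\mathrm{eff}^{(2)}=\sum_{m\ne0}\frac{[[\mathrm{i}\mathcal{L}_{-m},\mathrm{i}\mathcal{L}_0],\mathrm{i}\mathcal{L}_m]}{2m^2\omega^2}+\sum_{m\ne0}\sum_{n\ne0,m}\frac{[[\mathrm{i}\mathcal{L}_{-m},\mathrm{i}\mathcal{L}_{m-n}],\mathrm{i}\mathcal{L}_n]}{3mn\omega^2}$, and in general each $\mathcal{L}_\mathrm{eff}^{(k)}$ with $k\ge1$ is a linear combination (with complex coefficients) of nested commutators of the superoperators $\mathcal{L}_m$. $\mathcal{L}_\mathrm{eff}$ is regarded as a linear map on the space of operators on $\mathfrak{h}$. *)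

From HB Require Import structures.
From mathcomp Require Import all_boot all_order all_algebra.
From mathcomp Require Import all_classical all_reals all_analysis.
From mathcomp Require Import complex.
Import numFieldNormedType.Exports.
Set Implicit Arguments. Unset Strict Implicit. Unset Printing Implicit Defensive.
Import Order.TTheory GRing.Theory Num.Theory.
Local Open Scope ring_scope.

(* The Hilbert space is C^d with C = R[i]; operators are 'M[R[i]]_d;
   superoperators are represented by their matrices 'M[R[i]]_(d*d)
   (via lin_mx, acting on mxvec-encoded operators). *)

Section Lindblad.
Variable R : realType.
Local Notation C := (R[i]).
Variable d : nat.

Definition adj (A : 'M[C]_d) : 'M[C]_d := map_mx conjc A^T.

Definition Hsup (Hm : 'M[C]_d) (rho : 'M[C]_d) : 'M[C]_d :=
  - (Complex 0 1) *: (Hm *m rho - rho *m Hm).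

Variable J : nat.

Definition Dterm (Ls : 'I_J -> int -> 'M[C]_d) (m n : int) (rho : 'M[C]_d)
  : 'M[C]_d :=
  \sum_(a < J)
    (Ls a (m - n) *m rho *m adj (Ls a n)
     - 2^-1 *: (adj (Ls a n) *m Ls a (m - n) *m rho
                + rho *m (adj (Ls a n) *m Ls a (m - n)))).

(* Symmetric partial sums over n in [-K, K]. *)
Definition Dpart (Ls : 'I_J -> int -> 'M[C]_d) (m : int) (rho : 'M[C]_d)
  (K : nat) : 'M[C]_d :=
  \sum_(k < (K + K).+1) Dterm Ls m (k%:Z - K%:Z) rho.

Definition Dconv (Ls : 'I_J -> int -> 'M[C]_d) : Prop :=
  forall (m : int) (rho : 'M[C]_d) (i j : 'I_d),
    cvgn (fun K : nat => (complex.Re (Dpart Ls m rho K i j) : R)) /\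
    cvgn (fun K : nat => (complex.Im (Dpart Ls m rho K i j) : R)).

Definition Dsup (Ls : 'I_J -> int -> 'M[C]_d) (m : int) (rho : 'M[C]_d)
  : 'M[C]_d :=
  \matrix_(i, j) Complex (limn (fun K : nat => (complex.Re (Dpart Ls m rho K i j) : R)))
                         (limn (fun K : nat => (complex.Im (Dpart Ls m rho K i j) : R))).

Definition Lsup (H : int -> 'M[C]_d) (Ls : 'I_J -> int -> 'M[C]_d) (m : int)
  (rho : 'M[C]_d) : 'M[C]_d := Hsup (H m) rho + Dsup Ls m rho.

Definition Lmx (H : int -> 'M[C]_d) (Ls : 'I_J -> int -> 'M[C]_d) (m : int)
  : 'M[C]_(d * d) := lin_mx (Lsup H Ls m).

End Lindblad.

(* Formal nested commutators of the L_m (leaves labelled by Fourier index). *)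
Inductive ctree : Type := CLeaf of int | CBr of ctree & ctree.

Definition is_br (t : ctree) : bool := if t is CBr _ _ then true else false.

Fixpoint ceval (K : fieldType) (n : nat) (Lm : int -> 'M[K]_n) (t : ctree)
  : 'M[K]_n :=
  match t with
  | CLeaf m => Lm m
  | CBr a b => ceval Lm a *m ceval Lm b - ceval Lm b *m ceval Lm a
  end.

Definition nested_comm_comb (K : fieldType) (n : nat) (Lm : int -> 'M[K]_n)
  (X : 'M[K]_n) : Prop :=
  exists s : seq (K * ctree),
    all (fun p => is_br p.2) s /\ X = \sum_(p <- s) p.1 *: ceval Lm p.2.

From HB Require Import structures.
From mathcomp Require Import all_boot all_order all_algebra.
From mathcomp Require Import all_classical all_reals all_analysis.
From mathcomp Require Import complex.
Import numFieldNormedType.Exports.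
Import Order.TTheory GRing.Theory Num.Theory.
Local Open Scope ring_scope.

(* Every Fourier component L_m annihilates the trace functional tr: the
   Hamiltonian part is a commutator, and in the dissipator
   tr (L rho L^+) = tr (L^+ L rho) cancels the anticommutator term; the
   Fourier sums over n preserve this in the limit.  The superoperators
   killed by tr form a left ideal, so tr also kills every nested commutator
   of the L_m and hence the truncated L_eff.  Thus tr is a nonzero vector in the
   kernel of (the transpose of) L_eff, and 0 is an eigenvalue. *)

Section TraceCol.
Variable K : pzRingType.
Variable d : nat.

Definition trace_col : 'cV[K]_(d * d) :=
  \col_k \tr (vec_mx (delta_mx 0 k) : 'M[K]_d).

Lemma mulmx_trace_col m (M : 'M[K]_(m, d * d)) :
  M *m trace_col = \col_i (\tr (vec_mx (row i M)) : K).
Proof.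
apply/matrixP => i j; rewrite !mxE (ord1 j).
rewrite [row i M in RHS]row_sum_delta !raddf_sum /=; apply: eq_bigr => k _.
by rewrite !mxE linearZ /= mxtraceZ.
Qed.

Lemma lin_mx_trace_col (f : 'M[K]_d -> 'M[K]_d) :
  (forall A, \tr (f A) = 0) -> lin_mx f *m trace_col = 0.
Proof.
move=> trf0; rewrite mulmx_trace_col; apply/matrixP => i j; rewrite !mxE.
have -> : row i (lin_mx f) = mxvec (f (vec_mx (delta_mx 0 i))).
  by apply/rowP => k; rewrite !mxE.
by rewrite mxvecK trf0.
Qed.

End TraceCol.

Lemma trace_col_neq0 {K : nzRingType} {d : nat} :
  (0 < d)%N -> trace_col K d != 0.
Proof.
case: d => // d _; apply/eqP => /matrixP/(_ (mxvec_index ord0 ord0) 0).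
rewrite !mxE vec_mx_delta.
have -> : \tr (delta_mx ord0 ord0 : 'M[K]_d.+1) = 1.
  rewrite /mxtrace (bigD1 ord0) //= mxE !eqxx big1 ?addr0 // => i ne_i0.
  by rewrite mxE (negbTE ne_i0).
exact/eqP/oner_neq0.
Qed.

Section ColumnKernel.
Context {K : fieldType} {n : nat} {Lm : int -> 'M[K]_n} {v : 'cV[K]_n}.
Hypothesis Lm_v : forall m, Lm m *m v = 0.

Lemma ceval_mulmx_eq0 t : ceval Lm t *m v = 0.
Proof.
elim: t => [m|a IHa b IHb] //=.
by rewrite mulmxBl -!mulmxA IHa IHb !mulmx0 subrr.
Qed.

Lemma nested_comm_comb_mulmx_eq0 X : nested_comm_comb Lm X -> X *m v = 0.
Proof.
move=> [s [_ ->]]; rewrite mulmx_suml big1 // => p _.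
by rewrite -scalemxAl ceval_mulmx_eq0 scaler0.
Qed.

End ColumnKernel.

(* [eigenvalue] is about row eigenvectors; the column kernel vector [v] is
   carried over through [\det A^T = \det A]. *)
Lemma eigenvalue0_mulmx_col {K : fieldType} {n : nat} {A : 'M[K]_n}
    {v : 'cV_n} :
  v != 0 -> A *m v = 0 -> eigenvalue A 0.
Proof.
move=> v_neq0 Av0.
have /det0P[w w_neq0 wA0] : \det A == 0.
  rewrite -det_tr; apply/det0P; exists v^T; first by rewrite trmx_eq0.
  by rewrite -trmx_mul Av0 trmx0.
by apply/eigenvalueP; exists w; rewrite ?wA0 ?scale0r.
Qed.

Lemma mxtrace_dissipator (K : numFieldType) n (A B rho : 'M[K]_n) :
  \tr (A *m rho *m B - 2^-1 *: (B *m A *m rho + rho *m (B *m A))) = 0.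
Proof.
rewrite raddfB /= mxtraceZ mxtraceD.
rewrite (mxtrace_mulC rho) (mxtrace_mulC (A *m rho)) mulmxA; set x := \tr _.
by rewrite -mulr2n -[x *+ 2]mulr_natl mulrA mulVf ?pnatr_eq0 // mul1r subrr.
Qed.

Lemma limn_sum (R : realType) (I : Type) (r : seq I) (u : I -> nat -> R) :
  (forall i, cvgn (u i)) ->
  limn (fun K => \sum_(i <- r) u i K) = \sum_(i <- r) limn (u i).
Proof.
move=> u_cvg; apply: cvg_lim => //.
by apply: (cvg_big add_continuous) => // i _; apply: u_cvg.
Qed.

Lemma mxtrace_limn_entries (R : realType) n (u : nat -> 'M[R[i]]_n) :
  (forall i, cvgn (fun K => complex.Re (u K i i)) /\
             cvgn (fun K => complex.Im (u K i i))) ->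
  \tr (\matrix_(i, j) Complex (limn (fun K => complex.Re (u K i j)))
                              (limn (fun K => complex.Im (u K i j)))) =
  Complex (limn (fun K => complex.Re (\tr (u K))))
          (limn (fun K => complex.Im (\tr (u K)))).
Proof.
move=> u_cvg.
have ReE (A : 'M[R[i]]_n) : complex.Re (\tr A) = \sum_i complex.Re (A i i).
  exact: (raddf_sum (@complex.Re R : Rcomplex R -> R)).
have ImE (A : 'M[R[i]]_n) : complex.Im (\tr A) = \sum_i complex.Im (A i i).
  exact: (raddf_sum (@complex.Im R : Rcomplex R -> R)).
under [X in _ = Complex (limn X) _]funext => K do rewrite ReE.
under [X in _ = Complex _ (limn X)]funext => K do rewrite ImE.
rewrite !limn_sum => [|i|i]; try by case: (u_cvg i).
apply/eqP; rewrite eq_complex ReE ImE.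
by apply/andP; split; apply/eqP; apply: eq_bigr => i _; rewrite mxE.
Qed.

Section LindbladTrace.
Context {R : realType} {d J : nat}.
Context (H : int -> 'M[R[i]]_d) {Ls : 'I_J -> int -> 'M[R[i]]_d}.
Hypothesis Ls_cvg : Dconv Ls.

Lemma mxtrace_Hsup (Hm rho : 'M[R[i]]_d) : \tr (Hsup Hm rho) = 0.
Proof. by rewrite /Hsup mxtraceZ raddfB /= mxtrace_mulC subrr mulr0. Qed.

Lemma mxtrace_Dpart m rho K : \tr (Dpart Ls m rho K) = 0.
Proof.
rewrite raddf_sum big1 // => k _.
by rewrite raddf_sum big1 // => a _; apply: mxtrace_dissipator.
Qed.

Lemma mxtrace_Dsup m rho : \tr (Dsup Ls m rho) = 0.
Proof.
rewrite mxtrace_limn_entries => [|i]; last exact: Ls_cvg.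
under [X in Complex (limn X) _]funext => K do rewrite mxtrace_Dpart.
under [X in Complex _ (limn X)]funext => K do rewrite mxtrace_Dpart.
by rewrite !lim_cst.
Qed.

Lemma Lmx_mul_trace_col m : Lmx H Ls m *m trace_col _ d = 0.
Proof.
apply: lin_mx_trace_col => rho.
by rewrite mxtraceD mxtrace_Hsup mxtrace_Dsup addr0.
Qed.

End LindbladTrace.

Theorem theorem1 (R : realType) (d J : nat)
  (H : int -> 'M[R[i]]_d) (Ls : 'I_J -> int -> 'M[R[i]]_d)
  (N : nat) (Leff : nat -> 'M[R[i]]_(d * d)) :
  (0 < d)%N ->
  (forall m : int, H (- m) = adj (H m)) ->
  Dconv Ls ->
  Leff 0%N = Lmx H Ls 0 ->
  (forall k : nat, (0 < k <= N)%N -> nested_comm_comb (Lmx H Ls) (Leff k)) ->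
  eigenvalue (\sum_(k < N.+1) Leff k) 0.
Proof.
move=> d_gt0 _ Ls_cvg Leff0 Leff_comm.
apply: (eigenvalue0_mulmx_col (trace_col_neq0 d_gt0)).
rewrite mulmx_suml big1 // => k _.
have [->|k_gt0] := posnP k; first by rewrite Leff0 Lmx_mul_trace_col.
apply: (nested_comm_comb_mulmx_eq0 (Lmx_mul_trace_col H Ls_cvg)).
by apply: Leff_comm; rewrite k_gt0 -ltnS ltn_ord.
Qed.
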